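(* Let $n,r$ be positive integers with $2\leq r\leq n$. Then (a) $(\mathfrak{H}_{n,k}^{r}, \mathfrak{M}_{n,k}^{r})$ is a maximal and stable cross-intersecting pair in $\mathcal{I}_{n,k}^{r}$; and (b) if $r \leq n-1$, then $\mathcal{H}_{n,k}^r$ is a maximal and stable intersecting family in $\mathcal{I}_{n,k}^{r}$.
   Context: $\Gamma_{n,k}$ is the disjoint union of $n$ copies of $K_k$, with vertices $(i,j)$, $i\in[n]$, $j\in[k]$; $\mathcal{I}_{n,k}^r$ is the set of its independent sets of size $r$. $\mathfrak{H}_{n,k}^{r}=\{[r]\times\{1\}\}$, $\mathfrak{M}_{n,k}^{r}=\{X\in\mathcal{I}_{n,k}^r : X\cap([r]\times\{1\})\neq\emptyset\}$. For $r\le n-1$, with $H=[2,r+1]\times\{1\}$, $\mathcal{H}_{n,k}^r = \{ F \in \mathcal{I}_{n,k}^r : (1,1)\in F,\ F \cap H \neq \emptyset \} \cup \{H\}$. A pair of non-empty families is cross-intersecting if each member of the first meets each member of the second; it is maximal if not contained componentwise in a different cross-intersecting pair in $\mathcal{I}_{n,k}^r$. An intersecting family is maximal if it is not properly contained in an intersecting family in $\mathcal{I}_{n,k}^r$. For $i\in[n],s\in[2,k]$: $P_{i,s}(X)=(X\setminus\{(i,s)\})\cup\{(i,1)\}$ if $(i,s)\in X$, else $X$; $\pi_{i,s}(\mathcal{F})=\{P_{i,s}(X):X\in\mathcal{F}\}\cup\{X\in\mathcal{F}:P_{i,s}(X)\in\mathcal{F}\}$; a family is stable if $\pi_{i,s}(\mathcal{F})=\mathcal{F}$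 for all $i\in[n],s\in[2,k]$, and a pair is stable if both families are. *)

From mathcomp Require Import all_boot.
Set Implicit Arguments. Unset Strict Implicit. Unset Printing Implicit Defensive.

(* Conventions: vertex (i,j) of the paper, i in [n], j in [k], is encoded
   0-based as the pair (i-1, j-1) : 'I_n * 'I_k.  So the paper's column 1
   is column 0 here, (1,1) is (0,0), [r] x {1} = {(i,0) | i < r}, and
   s in [2,k] corresponds to s : 'I_k with 0 < s. *)

Definition vert (n k : nat) := ('I_n * 'I_k)%type.

(* Independent sets of Gamma_{n,k} (n disjoint copies of K_k):
   at most one vertex in each copy. *)
Definition indep n k (X : {set vert n k}) : bool :=
  [forall x in X, forall y in X, (x.1 == y.1) ==> (x == y)].

Definition Ifam n k r : {set {set vert n k}} :=
  [set X | indep X && (#|X| == r)].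

Definition firstr n k r : {set vert n k} :=
  [set x : vert n k | (x.1 < r) && (val x.2 == 0)].
Definition frakH n k r : {set {set vert n k}} := [set firstr n k r].

Definition frakM n k r : {set {set vert n k}} :=
  [set X in Ifam n k r | X :&: firstr n k r != set0].

Definition Hset n k r : {set vert n k} :=
  [set x : vert n k | (0 < x.1 <= r) && (val x.2 == 0)].
Definition calH n k r : {set {set vert n k}} :=
  [set F in Ifam n k r |
     [exists x in F, (val x.1 == 0) && (val x.2 == 0)]
     && (F :&: Hset n k r != set0)] :|: [set Hset n k r].

(* column "1" of the paper, built from any s : 'I_k (which witnesses 0 < k) *)
Definition col1 k (s : 'I_k) : 'I_k :=
  Ordinal (leq_ltn_trans (leq0n s) (ltn_ord s)).

Definition Pshift n k (i : 'I_n) (s : 'I_k) (X : {set vert n k}) : {set vert n k} :=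
  if (i, s) \in X then (X :\ (i, s)) :|: [set (i, col1 s)] else X.

Definition pishift n k (i : 'I_n) (s : 'I_k) (F : {set {set vert n k}})
  : {set {set vert n k}} :=
  [set Pshift i s X | X in F] :|: [set X in F | Pshift i s X \in F].

Definition stable n k (F : {set {set vert n k}}) : Prop :=
  forall (i : 'I_n) (s : 'I_k), 0 < val s -> pishift i s F = F.

Definition stable_pair n k (F G : {set {set vert n k}}) : Prop :=
  stable F /\ stable G.

Definition cross_intersecting n k (F G : {set {set vert n k}}) : Prop :=
  F != set0 /\ G != set0 /\
  forall A B, A \in F -> B \in G -> A :&: B != set0.

Definition maximal_cross_pair n k r (F G : {set {set vert n k}}) : Prop :=
  [/\ F \subset Ifam n k r, G \subset Ifam n k r, cross_intersecting F G &
    forall F' G' : {set {set vert n k}},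
      F' \subset Ifam n k r -> G' \subset Ifam n k r ->
      F \subset F' -> G \subset G' -> cross_intersecting F' G' ->
      F' = F /\ G' = G].

Definition intersecting n k (F : {set {set vert n k}}) : Prop :=
  forall A B, A \in F -> B \in F -> A :&: B != set0.

Definition maximal_intersecting n k r (F : {set {set vert n k}}) : Prop :=
  [/\ F \subset Ifam n k r, intersecting F &
    forall F' : {set {set vert n k}},
      F' \subset Ifam n k r -> F \subset F' -> intersecting F' -> F' = F].

From mathcomp Require Import all_boot.
Set Implicit Arguments. Unset Strict Implicit. Unset Printing Implicit Defensive.

(* Maximality rests on a completion property that needs k >= 2: an
   independent set C with |C| <= r avoiding an independent set A extends to
   a member of I^r still avoiding A, because each unused clique has a vertex
   missed by A.  If a family could be enlarged by some A, completing {x} for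
   x in ([r] x {1}) \ A, resp. {(1,1), x} for x in H \ A, produces a member of
   the partner family disjoint from A.  Stability holds because the shifts
   only move vertices into the first column, so they fix every set inside it
   and preserve every intersection with such a set. *)

Lemma card_ord_interval n a b : b <= n -> #|[pred i : 'I_n | a <= i < b]| = b - a.
Proof.
move=> bn; rewrite -sum1_card -(big_mkord (fun i => a <= i < b) (fun _ => 1)).
by rewrite -[b - a]muln1 -sum_nat_const_nat (big_nat_widenl _ _ _ _ _ (leq0n a))
  (big_nat_widen _ _ _ _ _ bn).
Qed.

Section IndependentSets.
Variables n k : nat.
Implicit Types (X Y A B C : {set vert n k}) (F : {set {set vert n k}}).
Implicit Types (i : 'I_n) (s : 'I_k) (x y v : vert n k).

Lemma vert_val_inj x y : val x.1 = val y.1 -> val x.2 = val y.2 -> x = y.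
Proof. by case: x y => [i c] [j d] /= /val_inj-> /val_inj->. Qed.

Lemma indepP X : reflect {in X &, injective fst} (indep X).
Proof.
apply: (iffP forallP) => [indX x y xX yX e | injX x].
  by move/(_ x): indX; rewrite xX => /forallP/(_ y); rewrite yX e eqxx => /eqP.
apply/implyP => xX; apply/forallP => y; apply/implyP => yX.
by apply/implyP => /eqP/injX-> //.
Qed.

Lemma indepS A B : A \subset B -> indep B -> indep A.
Proof.
by move=> /subsetP sAB /indepP indB; apply/indepP => x y /sAB xB /sAB; apply: indB.
Qed.

Definition first_col : {set vert n k} := [set x | val x.2 == 0].

Lemma indep_first_col : indep first_col.
Proof.
apply/indepP => x y; rewrite !inE => /eqP x0 /eqP y0 e.
by apply: vert_val_inj; rewrite ?e ?x0 ?y0.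
Qed.

Lemma Ifam_subset_eq r A B : A \in Ifam n k r -> B \in Ifam n k r -> A \subset B -> A = B.
Proof.
rewrite !inE => /andP[_ /eqP cA] /andP[_ /eqP cB] sAB.
by apply/eqP; rewrite eqEcard sAB cA cB /=.
Qed.

Lemma Ifam_neq0 r X : 0 < r -> X \in Ifam n k r -> X != set0.
Proof.
by move=> r_gt0; apply: contraTneq => ->; rewrite inE cards0 eq_sym (gtn_eqF r_gt0) andbF.
Qed.

Lemma Pshift_id i s X : (i, s) \notin X -> Pshift i s X = X.
Proof. by move=> isX; rewrite /Pshift ifN. Qed.

Lemma Pshift_first_col i s X : 0 < s -> X \subset first_col -> Pshift i s X = X.
Proof.
move=> s_gt0 /subsetP Xcol; apply: Pshift_id; apply: contraL s_gt0 => /Xcol.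
by rewrite inE => /eqP->.
Qed.

Lemma Pshift_first_colI i s X : 0 < s -> X :&: first_col \subset Pshift i s X.
Proof.
move=> s_gt0; apply/subsetP => x; rewrite !inE => /andP[xX /eqP x0].
rewrite /Pshift; case: ifP => // _; rewrite !inE xX andbT.
by apply/orP; left; apply: contraTneq s_gt0 => xis; move: x0; rewrite xis /= => ->.
Qed.

Lemma Pshift_meet i s X Y : 0 < s -> Y \subset first_col ->
  X :&: Y != set0 -> Pshift i s X :&: Y != set0.
Proof.
move=> s_gt0 Ycol /set0Pn[y]; rewrite inE => /andP[yX yY]; apply/set0Pn; exists y.
rewrite inE yY andbT (subsetP (Pshift_first_colI i X s_gt0)) // inE yX.
exact: (subsetP Ycol).
Qed.

Lemma Pshift_Ifam r i s X : 0 < s -> X \in Ifam n k r -> Pshift i s X \in Ifam n k r.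
Proof.
move=> s_gt0; rewrite /Pshift; case: ifP => // isX.
rewrite !inE => /andP[/indepP indX /eqP cX].
have iX : (i, col1 s) \notin X.
  by apply/negP => /indX/(_ isX erefl)[] /(congr1 val) /= s0; rewrite -s0 in s_gt0.
apply/andP; split.
  apply/indepP => x y; rewrite !inE.
  move=> /orP[/andP[xn xX] | /eqP->] /orP[/andP[yn yX] | /eqP->] //= e.
  - exact: indX.
  - by rewrite (indX _ _ xX isX e) eqxx in xn.
  - by rewrite (indX _ _ yX isX (esym e)) eqxx in yn.
by rewrite setUC cardsU1 !inE negb_and iX orbT -cX (cardsD1 (i, s) X) isX.
Qed.

Lemma stable_Pshift_closed F :
  (forall i s, 0 < s -> {in F, forall X, Pshift i s X \in F}) -> stable F.
Proof.
move=> closedF i s s_gt0; apply/setP => X; rewrite /pishift !inE.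
apply/idP/idP => [/orP[/imsetP[Y YF ->] | /andP[]//] | XF]; first exact: closedF.
by rewrite XF closedF ?orbT.
Qed.

Lemma exists_free_row C : #|C| < n -> exists j : 'I_n, j \notin [set x.1 | x in C].
Proof.
move=> cC; apply/existsP; rewrite -negb_forall; apply: contraL cC => /forallP rowsC.
have rowsT : [set x.1 | x in C] = setT by apply/setP => j; rewrite inE rowsC.
by rewrite -leqNgt; have := leq_imset_card fst C; rewrite rowsT cardsT card_ord.
Qed.

Lemma exists_col_notin A (j : 'I_n) : 1 < k -> indep A -> exists c : 'I_k, (j, c) \notin A.
Proof.
move=> k_gt1 /indepP indA; pose c0 : 'I_k := Ordinal (ltnW k_gt1).
case c0A: ((j, c0) \in A); last by exists c0; rewrite c0A.
by exists (Ordinal k_gt1); apply/negP => /indA/(_ c0A erefl)[].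
Qed.

Lemma indep_set1 v : indep [set v].
Proof. by apply/indepP => x y /set1P-> /set1P->. Qed.

Lemma indepU1 C v : indep C -> v.1 \notin [set x.1 | x in C] -> indep (v |: C).
Proof.
move=> /indepP indC vrow; apply/indepP => x y; rewrite !inE.
move=> /orP[/eqP-> | xC] /orP[/eqP-> | yC] // e.
- by move: vrow; rewrite e imset_f.
- by move: vrow; rewrite -e imset_f.
- exact: indC.
Qed.

Lemma indep_extend A C : 1 < k -> indep A -> indep C -> [disjoint A & C] -> #|C| < n ->
  exists v, [/\ v \notin C, indep (v |: C) & [disjoint A & v |: C]].
Proof.
move=> k_gt1 indA indC dAC cC; have [j jC] := exists_free_row cC.
have [c jcA] := exists_col_notin j k_gt1 indA.
exists (j, c); split; [| exact: indepU1 |].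
  by apply: contra jC => jcC; rewrite (imset_f _ jcC).
by rewrite -setI_eq0 setIUr setU_eq0 !setI_eq0 dAC disjoint_sym disjoints1 jcA.
Qed.

Lemma indep_completion r A C : 1 < k -> r <= n -> indep A -> indep C ->
  [disjoint A & C] -> #|C| <= r ->
  exists2 B, B \in Ifam n k r & (C \subset B) && [disjoint A & B].
Proof.
move=> k_gt1 rn indA + + /subnKC; move: (r - #|C|) => m.
elim: m C => [|m IHm] C indC dAC rE.
  by exists C; rewrite ?subxx // inE indC -rE addn0 /=.
have cC : #|C| < n by apply: leq_trans rn; rewrite -rE addnS ltnS leq_addr.
have [v [vC indvC dAvC]] := indep_extend k_gt1 indA indC dAC cC.
have [|B BI /andP[svCB dAB]] := IHm _ indvC dAvC; first by rewrite cardsU1 vC -rE addnS.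
by exists B; rewrite // dAB (subset_trans (subsetUr _ _) svCB).
Qed.

Definition meeting r Y : {set {set vert n k}} := [set X in Ifam n k r | X :&: Y != set0].

Lemma maximal_cross_pair_meeting r Y : 1 < k -> 0 < r -> r <= n -> Y \in Ifam n k r ->
  maximal_cross_pair r [set Y] (meeting r Y).
Proof.
move=> k_gt1 r_gt0 rn YI.
have YM : Y \in meeting r Y by rewrite inE YI setIid (Ifam_neq0 r_gt0 YI).
have MI : meeting r Y \subset Ifam n k r by apply/subsetP => X; rewrite inE => /andP[].
split; rewrite ?sub1set //.
  split; first by apply/set0Pn; exists Y; rewrite inE.
  by split=> [|A B]; [apply/set0Pn; exists Y | rewrite inE setIC => /eqP-> /setIdP[]].
move=> F' G' F'I G'I /[!sub1set] YF' MG' [_ [_ crossFG]].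
have G'M : G' = meeting r Y.
  apply/eqP; rewrite eqEsubset MG' andbT; apply/subsetP => B BG.
  by rewrite inE (subsetP G'I _ BG) setIC crossFG.
split => //; apply/eqP; rewrite eqEsubset sub1set YF' andbT.
apply/subsetP => A AF; rewrite inE; have AI := subsetP F'I _ AF.
have [/(Ifam_subset_eq YI AI)-> // | /subsetPn[x xY xA]] := boolP (Y \subset A).
have indA : indep A by move: AI; rewrite inE => /andP[].
have [||B BI /andP[sxB dAB]] := indep_completion k_gt1 rn indA (indep_set1 x).
- by rewrite disjoint_sym disjoints1.
- by rewrite cards1.
have BM : B \in meeting r Y.
  by rewrite inE BI; apply/set0Pn; exists x; rewrite inE xY (subsetP sxB) ?set11.
by have := crossFG A B AF; rewrite G'M BM setI_eq0 dAB => /(_ isT).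
Qed.

Definition hilton_milner r v Y : {set {set vert n k}} :=
  [set X in Ifam n k r | (v \in X) && (X :&: Y != set0)] :|: [set Y].

Lemma maximal_intersecting_hilton_milner r v Y : 1 < k -> 1 < r -> r <= n ->
  Y \in Ifam n k r -> v.1 \notin [set y.1 | y in Y] ->
  maximal_intersecting r (hilton_milner r v Y).
Proof.
move=> k_gt1 r_gt1 rn YI vrow; have r_gt0 := ltnW r_gt1.
have vY : v \notin Y by apply: contra vrow => /(imset_f fst).
have YHM : Y \in hilton_milner r v Y by rewrite !inE eqxx orbT.
split.
- by apply/subsetP => X /setUP[/setIdP[] | /set1P->].
- move=> A B; rewrite !inE => /orP[/and3P[_ vA AY] | /eqP->] /orP[/and3P[_ vB BY] | /eqP->] //.
  + by apply/set0Pn; exists v; rewrite inE vA.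
  + by rewrite setIC.
  + by rewrite setIid (Ifam_neq0 r_gt0 YI).
move=> F' F'I HMF' interF'; apply/eqP; rewrite eqEsubset HMF' andbT.
apply/subsetP => A AF; have AI := subsetP F'I _ AF; have YF := subsetP HMF' _ YHM.
have [vA | vA] := boolP (v \in A).
  by apply/setUP; left; apply/setIdP; rewrite vA setIC interF'.
have [/(Ifam_subset_eq YI AI)<- // | /subsetPn[x xY xA]] := boolP (Y \subset A).
have indA : indep A by move: AI; rewrite inE => /andP[].
have vx : v \notin [set x] by rewrite inE; apply: contraNneq vY => ->.
have [|||B BI /andP[svxB dAB]] := indep_completion (C := v |: [set x]) k_gt1 rn indA.
- rewrite indepU1 ?indep_set1 // imset_set1 inE.
  by apply: contraNneq vrow => ->; rewrite imset_f.
- by rewrite disjoint_sym -setI_eq0 setIUl setU_eq0 !setI_eq0 !disjoints1 vA xA.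
- by rewrite cardsU1 vx cards1.
have BHM : B \in hilton_milner r v Y.
  apply/setUP; left; apply/setIdP; rewrite BI (subsetP svxB) ?setU11 //; split => //.
  by apply/set0Pn; exists x; rewrite inE xY (subsetP svxB) // !inE eqxx orbT.
by have := interF' A B AF (subsetP HMF' _ BHM); rewrite setI_eq0 dAB.
Qed.

Lemma stable_set1 Y : Y \subset first_col -> stable [set Y].
Proof.
move=> Ycol; apply: stable_Pshift_closed => i s s_gt0 X /set1P->.
by rewrite Pshift_first_col ?set11.
Qed.

Lemma stable_meeting r Y : Y \subset first_col -> stable (meeting r Y).
Proof.
move=> Ycol; apply: stable_Pshift_closed => i s s_gt0 X /setIdP[XI XY].
by apply/setIdP; rewrite Pshift_Ifam ?Pshift_meet.
Qed.

Lemma stable_hilton_milner r v Y : v \in first_col -> Y \subset first_col ->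
  stable (hilton_milner r v Y).
Proof.
move=> vcol Ycol; apply: stable_Pshift_closed => i s s_gt0 X.
case/setUP => [/setIdP[XI /andP[vX XY]] | /set1P->]; last first.
  by rewrite Pshift_first_col //; apply/setUP; right; apply: set11.
apply/setUP; left; apply/setIdP; rewrite Pshift_Ifam ?Pshift_meet // andbT.
by rewrite (subsetP (Pshift_first_colI i X s_gt0)) // inE vX.
Qed.

Lemma first_col_interval_Ifam a b : 0 < k -> b <= n ->
  [set x : vert n k | (a <= x.1 < b) && (val x.2 == 0)] \in Ifam n k (b - a).
Proof.
move=> k_gt0 bn; set X := [set x | _]; rewrite inE.
have Xcol : X \subset first_col by apply/subsetP => x; rewrite !inE => /andP[].
rewrite (indepS Xcol indep_first_col) /=.
have -> : X = [set (i, Ordinal k_gt0) | i in [pred i : 'I_n | a <= i < b]].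
  apply/setP => -[i c]; rewrite inE /=.
  apply/idP/imsetP => [/andP[iab /eqP c0] | [j jab [-> ->]]].
    by exists i => //; congr pair; apply: val_inj.
  by move: jab; rewrite inE => ->.
by rewrite card_imset ?card_ord_interval // => i j [].
Qed.

Lemma firstr_Ifam r : 0 < k -> r <= n -> firstr n k r \in Ifam n k r.
Proof. by move=> k_gt0 rn; have := first_col_interval_Ifam 0 k_gt0 rn; rewrite subn0. Qed.

Lemma Hset_Ifam r : 0 < k -> r < n -> Hset n k r \in Ifam n k r.
Proof. by move=> k_gt0 rn; have := first_col_interval_Ifam 1 k_gt0 rn; rewrite subn1. Qed.

Lemma calH_hilton_milner r v : val v.1 = 0 -> val v.2 = 0 ->
  calH n k r = hilton_milner r v (Hset n k r).
Proof.
move=> v1 v2; apply/setP => X; rewrite !inE; congr (_ && (_ && _) || _).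
apply/existsP/idP => [[x /and3P[xX /eqP x1 /eqP x2]] | vX].
  by rewrite (@vert_val_inj v x) ?v1 ?v2 ?x1 ?x2.
by exists v; rewrite vX v1 v2.
Qed.
End IndependentSets.

Theorem corollary4p8 (n k r : nat) :
  2 <= k -> 2 <= r -> r <= n ->
  (maximal_cross_pair r (frakH n k r) (frakM n k r)
   /\ stable_pair (frakH n k r) (frakM n k r))
  /\ (r <= n - 1 ->
      maximal_intersecting r (calH n k r) /\ stable (calH n k r)).
Proof.
move=> k_gt1 r_gt1 rn; have k_gt0 := ltnW k_gt1; have r_gt0 := ltnW r_gt1.
have firstr_col : firstr n k r \subset first_col n k.
  by apply/subsetP => x; rewrite !inE => /andP[].
have Hset_col : Hset n k r \subset first_col n k.
  by apply/subsetP => x; rewrite !inE => /andP[].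
split.
  split; first exact: maximal_cross_pair_meeting (firstr_Ifam k_gt0 rn).
  by split; [apply: stable_set1 | apply: stable_meeting].
move=> rn1; have r_lt_n : r < n by rewrite subn1 -ltnS prednK ?(leq_trans r_gt0) in rn1.
pose v : vert n k := (Ordinal (leq_trans r_gt0 rn), Ordinal k_gt0).
rewrite (calH_hilton_milner r (v := v)) //; split.
  apply: maximal_intersecting_hilton_milner (Hset_Ifam k_gt0 r_lt_n) _ => //.
  apply/imsetP => -[y]; rewrite inE => /andP[/andP[y_gt0 _] _] /(congr1 val) /= y0.
  by rewrite -y0 in y_gt0.
by apply: stable_hilton_milner Hset_col; rewrite inE.
Qed.
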